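(* Let $m$ be a positive integer and let $C$ be a ternary near-extremal self-dual code of length $12m$. Let $A_{3m}$ denote the number of codewords of weight $3m$ in $C$. Then $A_{3m}\equiv 0 \pmod 8$.
   Context: A ternary code of length $n$ is a linear subspace of $\mathbb{F}_3^n$. Its dual is $C^\perp=\{x\in\mathbb{F}_3^n : \sum_{k=1}^n x_k y_k = 0 \text{ for all } y\in C\}$, and $C$ is self-dual if $C=C^\perp$. The weight of a vector is the number of its nonzero coordinates. A ternary self-dual code of length $n$ is near-extremal if its minimum (nonzero) weight equals $3\lfloor n/12\rfloor$; for length $12m$ this is $3m$. *)

From HB Require Import structures.
From mathcomp Require Import all_boot all_order all_algebra.
Set Implicit Arguments. Unset Strict Implicit. Unset Printing Implicit Defensive.
Import GRing.Theory.
Local Open Scope ring_scope.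

Notation F3 := 'F_3.
Definition ternary_code (n : nat) := {vspace 'rV[F3]_n}.

Definition tdot n (x y : 'rV[F3]_n) : F3 := \sum_(k < n) x 0 k * y 0 k.

Definition in_dual n (C : ternary_code n) (x : 'rV[F3]_n) : bool :=
  [forall y : 'rV[F3]_n, (y \in C) ==> (tdot x y == 0)].

Definition self_dual n (C : ternary_code n) : Prop :=
  forall x : 'rV[F3]_n, (x \in C) = in_dual C x.

Definition wt n (x : 'rV[F3]_n) : nat := #|[set k : 'I_n | x 0 k != 0]|.

Definition min_weight_eq n (C : ternary_code n) (d : nat) : Prop :=
  (exists2 x, (x \in C) && (x != 0) & wt x = d) /\
  (forall x, x \in C -> x != 0 -> (d <= wt x)%N).

Definition near_extremal n (C : ternary_code n) : Prop :=
  self_dual C /\ min_weight_eq C (3 * (n %/ 12)).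

Definition A_w n (C : ternary_code n) (w : nat) : nat :=
  #|[set x : 'rV[F3]_n | (x \in C) && (wt x == w)]|.

(* Write n = 12m, d = 3m, and let C(S) be the set of codewords supported in a
   set S of coordinates. Counting the pairs (c, y) with c in C, y supported in
   S and c.y = 0 in two ways gives, for self-dual C,
     |C(S)| 3^(n-|S|) = |C| |C(~S)|.
   Fix a coordinate i and sum over the sets S of size k+1 <= d containing i. On
   the left C(S) is trivial unless S is the support of a minimum weight word; on
   the right a word with c_i = 0 is counted binom(n-1-wt c, k) times. Hence
     3^(n-k-1) (binom(n-1, k) + A_i(k+1)) = |C| sum_(c in C, c_i = 0) binom(n-1-wt c, k),
   where A_i(w) counts the words of weight w with c_i <> 0.
   Weights are multiples of 3, so n-1-wt c = 3q+2 with q < d, and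
   (1+X)^(3q+2) = (1+X)^2 (1 + X(3+3X+X^2))^q is triangular in the basis
   X^l (1+X)^2 (3+3X+X^2)^l. Subtracting the identities for two coordinates
   i and j, the equations for k < d-1 force the one for k = d-1 to read
   |C| 3^(d-1) (A_j(d) - A_i(d)) = 3^(n-d) (A_i(d) - A_j(d)), so A_i(d) = A_j(d).
   Counting incidences, n A_i(d) = d A_d, i.e. A_d = 4 A_i(d); and A_i(d) is
   even since c |-> -c exchanges the words with c_i = 1 and with c_i = 2. *)

From mathcomp Require Import all_boot all_order all_algebra.
From mathcomp Require Import ring zify.
Set Implicit Arguments. Unset Strict Implicit. Unset Printing Implicit Defensive.
Import GRing.Theory Num.Theory.
Local Open Scope ring_scope.

Lemma sum_bool_card (T : finType) (A P : pred T) :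
  (\sum_(x | A x) P x = #|[set x | A x && P x]|)%N.
Proof. by rewrite -big_mkcondr sum1dep_card. Qed.

Lemma F3_cases (a : F3) : [|| a == 0, a == 1 | a == 2].
Proof. by case: a => [[|[|[|]]] //=]. Qed.

Lemma card_ker_F3 (T : finZmodType) (V : {set T}) (phi : T -> F3) :
  {in V &, forall u v, u + v \in V} -> {morph phi : u v / u + v} ->
  (exists2 v0, v0 \in V & phi v0 != 0) ->
  (3 * #|[set v in V | phi v == 0%R]| = #|V|)%N.
Proof.
move=> addV phiD [v0 Vv0 phiv0].
have [v1 Vv1 phiv1] : exists2 v1, v1 \in V & phi v1 = 1.
  case/or3P: (F3_cases (phi v0)) => /eqP phiv0E; first by move: phiv0; rewrite phiv0E.
    by exists v0.
  by exists (v0 + v0); rewrite ?addV // phiD phiv0E; apply/eqP.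
pose F (a : F3) := [set v in V | phi v == a].
have fiber_le a : (#|F a| <= #|F (a + 1)%R|)%N.
  rewrite -(card_imset _ (addIr v1)); apply: subset_leq_card.
  apply/subsetP => _ /imsetP[v + ->]; rewrite !inE => /andP[Vv /eqP phiv].
  by rewrite addV //= phiD phiv phiv1.
have add111 a : a + 1 + 1 + 1 = a :> F3.
  by rewrite -!addrA [1 + (1 + 1)](_ : _ = 0 :> F3) ?addr0 //; apply/eqP.
have fiber_eq a : #|F (a + 1)| = #|F a|.
  apply/eqP; rewrite eqn_leq fiber_le andbT.
  by rewrite -{2}(add111 a); apply: leq_trans (fiber_le _) _; apply: fiber_le.
have cardV : #|V| = (\sum_(a : F3) #|F a|)%N.
  rewrite -sum1_card (partition_big phi predT) //=.
  by apply: eq_bigr => a _; rewrite sum1dep_card.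
rewrite cardV (eq_bigr (fun _ => #|F 0|)) ?sum_nat_const ?card_Fp // => a _.
case/or3P: (F3_cases a) => /eqP -> //; first by rewrite -[1]add0r fiber_eq.
by rewrite (_ : 2 = 0 + 1 + 1) ?fiber_eq //; apply/eqP.
Qed.

Section Supports.
Variable n : nat.
Implicit Types (x y : 'rV[F3]_n) (T : {set 'I_n}).

Definition supp x : {set 'I_n} := [set k | x 0 k != 0].
Definition vectors_on T : {set 'rV[F3]_n} := [set y | supp y \subset T].

Lemma mem_supp x k : (k \in supp x) = (x 0 k != 0).
Proof. by rewrite inE. Qed.

Lemma wt_supp x : wt x = #|supp x|.
Proof. by []. Qed.

Lemma supp0 : supp 0 = set0.
Proof. by apply/setP => k; rewrite !inE mxE eqxx. Qed.

Lemma wt0 : wt (0 : 'rV[F3]_n) = 0%N.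
Proof. by rewrite wt_supp supp0 cards0. Qed.

Lemma wt_lt_notin x k : k \notin supp x -> (wt x < n)%N.
Proof.
move=> kx; rewrite wt_supp -[X in (_ < X)%N]card_ord -cardsT; apply: proper_card.
by apply/properP; split; [exact: subsetT | exists k].
Qed.

Lemma supp_delta k : supp (delta_mx 0 k) = [set k].
Proof. by apply/setP => j; rewrite !inE mxE eqxx /=; case: (j == k). Qed.

Lemma vectors_onD T : {in vectors_on T &, forall u v, u + v \in vectors_on T}.
Proof.
move=> u v; rewrite !inE => /subsetP suT /subsetP svT; apply/subsetP => k.
rewrite mem_supp mxE; apply: contraNT => kT.
have /eqP -> : u 0 k == 0 by apply: contraNT kT => /negbTE uk; apply: suT; rewrite mem_supp uk.
have /eqP -> : v 0 k == 0 by apply: contraNT kT => /negbTE vk; apply: svT; rewrite mem_supp vk.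
by rewrite addr0.
Qed.

Lemma card_vectors_on T : #|vectors_on T| = (3 ^ #|T|)%N.
Proof.
elim: {T}#|T| {-2}T (erefl #|T|) => [|s IH] T cardT.
  rewrite (cards0_eq cardT) (_ : vectors_on set0 = [set 0]) ?cards1 ?cards0 //.
  apply/setP => y; rewrite !inE subset0; apply/eqP/eqP => [y0|->].
    by apply/rowP => k; rewrite mxE; apply/eqP; rewrite -[_ == 0]negbK -mem_supp y0 inE.
  by apply/setP => k; rewrite !inE mxE eqxx.
have [k Tk] : {k | k \in T} by apply/sigW/set0Pn; rewrite -card_gt0 cardT.
have cardTk : #|T :\ k| = s by apply/eqP; rewrite -eqSS -cardT (cardsD1 k T) Tk.
rewrite -(@card_ker_F3 _ (vectors_on T) (fun y => y 0 k)); first last.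
- by exists (delta_mx 0 k); rewrite ?inE ?supp_delta ?sub1set ?mxE ?eqxx.
- by move=> u v; rewrite mxE.
- exact: vectors_onD.
rewrite (_ : [set y in _ | _] = vectors_on (T :\ k)) ?IH ?cardT ?expnS ?cardTk //.
by apply/setP => y; rewrite !inE subsetD1 mem_supp negbK andbC.
Qed.

End Supports.

Section Duality.
Variable n : nat.
Implicit Types (x y : 'rV[F3]_n) (T : {set 'I_n}) (C : ternary_code n).

Lemma tdotC x y : tdot x y = tdot y x.
Proof. by apply: eq_bigr => k _; rewrite mulrC. Qed.

Lemma tdotDr x : {morph tdot x : u v / u + v}.
Proof. by move=> u v; rewrite /tdot -big_split; apply: eq_bigr => k _; rewrite mxE mulrDr. Qed.

Lemma tdot_delta x k : tdot x (delta_mx 0 k) = x 0 k.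
Proof.
rewrite /tdot (bigD1 k) //= big1 => [|j /negbTE jk]; first by rewrite mxE !eqxx mulr1 addr0.
by rewrite mxE jk mulr0.
Qed.

Lemma tdot_supp_disjoint x y : [disjoint supp x & supp y] -> tdot x y = 0.
Proof.
move=> xy; apply: big1 => k _; case: (boolP (k \in supp x)) => [/(disjointFr xy)|].
  by rewrite mem_supp => /negbFE/eqP ->; rewrite mulr0.
by rewrite mem_supp negbK => /eqP ->; rewrite mul0r.
Qed.

Lemma card_orthogonal_vectors_on x T :
  (3 * #|[set y in vectors_on T | tdot x y == 0%R]|
   = #|vectors_on T| * (if supp x \subset ~: T then 3 else 1))%N.
Proof.
case: ifPn => [xT | /subsetPn[k xk]]; last rewrite inE negbK => Tk.
  rewrite mulnC; congr (_ * _)%N; apply: eq_card => y; rewrite !inE andb_idr //.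
  move=> yT; rewrite tdot_supp_disjoint //.
  by rewrite disjoints_subset (subset_trans xT) ?setCS.
rewrite muln1 card_ker_F3 //.
- exact: vectors_onD.
- exact: tdotDr.
by exists (delta_mx 0 k); rewrite ?tdot_delta -?mem_supp // inE supp_delta sub1set.
Qed.

Definition codewords C := [set c : 'rV[F3]_n | c \in C].
Definition code_on C T := [set c in codewords C | supp c \subset T].

Lemma card_code_orthogonal C y :
  (3 * #|[set c in codewords C | tdot c y == 0%R]|
   = #|codewords C| * (if in_dual C y then 3 else 1))%N.
Proof.
case: ifPn => [/forallP yC | /forallPn[c]]; last rewrite negb_imply => /andP[Cc yc].
  rewrite mulnC; congr (_ * _)%N; apply: eq_card => c; rewrite !inE andb_idr // tdotC.
  by move/implyP: (yC c).
rewrite muln1 card_ker_F3 //.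
- by move=> u v; rewrite !inE; apply: memvD.
- by move=> u v; rewrite tdotC tdotDr !(tdotC y).
by exists c; rewrite ?inE // tdotC.
Qed.

Lemma card_code_on_dual C T :
  (#|code_on C (~: T)| * 3 ^ #|T|
   = #|codewords C| * #|[set y in vectors_on T | in_dual C y]|)%N.
Proof.
have sum31 (I : finType) (A : {pred I}) (P : pred I) :
    (\sum_(x in A) (if P x then 3 else 1) = #|A| + 2 * #|[set x in A | P x]|)%N.
  rewrite -sum_bool_card big_distrr -sum1_card -big_split /=.
  by apply: eq_bigr => x _; case: (P x).
have pairs : (\sum_(c in codewords C) #|[set y in vectors_on T | tdot c y == 0%R]|
    = \sum_(y in vectors_on T) #|[set c in codewords C | tdot c y == 0%R]|)%N.
  under eq_bigr do rewrite -sum_bool_card.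
  by rewrite exchange_big; apply: eq_bigr => y _; rewrite -sum_bool_card.
have /eqP := congr1 (muln 3) pairs; rewrite !big_distrr /=.
under eq_bigr do rewrite card_orthogonal_vectors_on.
under [X in _ == X]eq_bigr do rewrite card_code_orthogonal.
rewrite -!big_distrr /= !sum31 card_vectors_on => /eqP.
rewrite mulnDr [X in _ = X]mulnDr mulnC => /addnI.
by rewrite mulnCA [X in _ = X]mulnCA => /eqP; rewrite eqn_mul2l /= mulnC => /eqP.
Qed.

End Duality.

Lemma card_sets_through_avoiding (I : finType) (i : I) (D : {set I}) k :
  i \notin D ->
  #|[set S : {set I} | [&& i \in S, [disjoint S & D] & #|S| == k.+1]]|
  = 'C(#|I|.-1 - #|D|, k).
Proof.
move=> Di.
have notin_T (T : {set I}) : T \subset ~: D :\ i -> i \notin T.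
  by rewrite subsetD disjoint_sym disjoints1 => /andP[].
have -> : [set S : {set I} | [&& i \in S, [disjoint S & D] & #|S| == k.+1]]
    = setU [set i] @: [set T : {set I} | T \subset ~: D :\ i & #|T| == k].
  apply/setP => S; rewrite inE; apply/and3P/imsetP => [[iS SD /eqP cardS]|[T + ->]].
    exists (S :\ i); last by rewrite setD1K.
    rewrite inE setSD -?disjoints_subset //=.
    by rewrite (cardsD1 i S) iS add1n in cardS; case: cardS => ->.
  rewrite inE => /andP[TDi /eqP cardT].
  rewrite setU11 disjoints_subset subUset sub1set inE Di (subset_trans TDi) ?subsetDl //.
  by rewrite cardsU1 (notin_T _ TDi) cardT.
rewrite card_in_imset ?cards_draws; last first.
  move=> T1 T2; rewrite !inE => /andP[/notin_T T1i _] /andP[/notin_T T2i _] eqT.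
  by rewrite -(setU1K T1i) eqT setU1K.
have := cardsD1 i (~: D); have := cardsC D; rewrite inE Di /=.
by move=> cardDC cardDCi; congr 'C(_, _); lia.
Qed.

Section SetsThroughCoordinate.
Variables (n : nat) (C : ternary_code n) (i : 'I_n).

(* The shortened code at i, with coordinate i kept rather than deleted. *)
Definition shortened := [set c in codewords C | c 0 i == 0].
Definition A_through w := #|[set c in codewords C | (c 0 i != 0) && (wt c == w)]|.

Lemma sum_card_code_on_compl k :
  (\sum_(S : {set 'I_n} | (i \in S) && (#|S| == k.+1)) #|code_on C (~: S)|
   = \sum_(c in shortened) 'C(n.-1 - wt c, k))%N.
Proof.
rewrite (eq_bigr (fun S => \sum_(c in codewords C) (supp c \subset ~: S))%N); last first.
  by move=> S _; rewrite sum_bool_card.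
rewrite exchange_big /= big_mkcond [RHS]big_mkcond /=; apply: eq_bigr => c _.
rewrite [c \in shortened]inE; case: (c \in codewords C) => //=.
rewrite sum_bool_card; case: ifPn => ci.
  rewrite -[n in n.-1]card_ord wt_supp -(@card_sets_through_avoiding _ i) ?mem_supp ?negbK //.
  apply: eq_card => S; rewrite !inE -andbA disjoint_sym disjoints_subset.
  by case: (i \in S); rewrite //= andbC.
apply/eqP; rewrite cards_eq0; apply/eqP/setP => S; rewrite !inE.
apply/negbTE/negP => /andP[/andP[iS _] /subsetP/(_ i)].
by rewrite mem_supp ci inE iS => /(_ isT).
Qed.

Lemma sum_card_code_on k :
  (forall c, c \in C -> c != 0 -> (k < wt c)%N) ->
  (\sum_(S : {set 'I_n} | (i \in S) && (#|S| == k.+1)) #|code_on C S|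
   = 'C(n.-1, k) + A_through k.+1)%N.
Proof.
move=> min_wt.
rewrite (eq_bigr (fun S : {set _} => \sum_(c in codewords C) (supp c \subset S))%N);
  last first.
  by move=> S _; rewrite sum_bool_card.
rewrite exchange_big /= (bigD1 0) ?inE ?mem0v //=; congr (_ + _)%N.
  rewrite sum_bool_card.
  have := @card_sets_through_avoiding _ i set0 k (negbT (in_set0 i)).
  rewrite cards0 subn0 card_ord => <-; apply: eq_card => S.
  by rewrite !inE -andbA disjoints_subset setC0 subsetT supp0 sub0set andbT.
rewrite /A_through -sum_bool_card [RHS](bigD1 0) ?inE ?mem0v //= wt0 andbF add0n.
apply: eq_bigr => c /andP[]; rewrite inE => Cc c0; rewrite sum_bool_card.
case: (boolP ((c 0 i != 0) && (wt c == k.+1))) => [/andP[ci /eqP wtc] | not_block].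
  rewrite /= -(cards1 (supp c)); apply: eq_card => S; rewrite !inE.
  apply/idP/eqP => [/andP[/andP[_ /eqP cardS] cS] | ->]; last first.
    by rewrite mem_supp ci -wtc !eqxx subxx.
  by apply/esym/eqP; rewrite eqEcard cS cardS -wtc leqnn.
apply/eqP; rewrite cards_eq0; apply/eqP/setP => S; rewrite !inE.
apply/negbTE/negP => /andP[/andP[iS /eqP cardS] cS]; move: not_block.
have wtc : wt c = k.+1.
  by apply/eqP; rewrite eqn_leq (min_wt c Cc c0) andbT -cardS subset_leq_card.
have suppS : supp c = S by apply/eqP; rewrite eqEcard cS cardS -wtc leqnn.
by rewrite -mem_supp suppS iS wtc eqxx.
Qed.

Lemma A_through_identity k :
  self_dual C -> (forall c, c \in C -> c != 0 -> (k < wt c)%N) ->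
  (3 ^ (n - k.+1) * ('C(n.-1, k) + A_through k.+1)
   = #|codewords C| * \sum_(c in shortened) 'C(n.-1 - wt c, k))%N.
Proof.
move=> sdC min_wt; rewrite -sum_card_code_on // -sum_card_code_on_compl !big_distrr /=.
apply: eq_bigr => S /andP[_ /eqP cardS]; rewrite mulnC -cardS.
have := card_code_on_dual C (~: S); rewrite setCK (cardsCs (~: S)) setCK card_ord.
rewrite (_ : [set y in _ | _] = code_on C (~: S)) //.
by apply/setP => y; rewrite !inE -sdC andbC.
Qed.

End SetsThroughCoordinate.

Section CodewordCounts.
Variables (n : nat) (C : ternary_code n).

Lemma self_dual_wt_dvd3 c : self_dual C -> c \in C -> (3 %| wt c)%N.
Proof.
move=> sdC Cc; have := Cc; rewrite sdC => /forallP/(_ c); rewrite Cc /= => /eqP cc0.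
rewrite (dvdn_pcharf (pchar_Fp (isT : prime 3))) -cc0 /tdot.
rewrite (eq_bigr (fun k => ((c 0 k != 0) : nat)%:R)) => [|k _]; last first.
  by case/or3P: (F3_cases (c 0 k)) => /eqP ->; apply/eqP.
by rewrite -natr_sum sum_bool_card; apply/eqP; congr _%:R; apply: eq_card => k; rewrite !inE.
Qed.

Lemma A_w_split i w :
  A_w C w = (#|[set c in shortened C i | wt c == w]| + A_through C i w)%N.
Proof.
rewrite /A_w /A_through -(cardsID (shortened C i)).
by congr addn; apply: eq_card => c; rewrite !inE;
  case: (c \in C); case: (c 0 i == 0); case: (wt c == w).
Qed.

Lemma sum_A_through w : (\sum_(i < n) A_through C i w = w * A_w C w)%N.
Proof.
rewrite /A_through; under eq_bigr do rewrite -sum_bool_card.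
rewrite exchange_big /A_w -sum_bool_card big_distrr /=.
apply: eq_big => [c | c _]; first by rewrite inE.
case: (boolP (wt c == w)) => [/eqP <- | _]; last by rewrite muln0 big1 // => i; rewrite andbF.
by rewrite muln1 sum_bool_card wt_supp; apply: eq_card => k; rewrite !inE andbT.
Qed.

Lemma A_through_even i w : (2 %| A_through C i w)%N.
Proof.
have wtN c : wt (- c) = wt c by apply: eq_card => k; rewrite !inE mxE oppr_eq0.
pose ones := [set c in codewords C | (c 0 i == 1) && (wt c == w)].
pose twos := [set c in codewords C | (c 0 i == 2) && (wt c == w)].
have twosE : twos = [set - c | c in ones].
  apply/setP => c; rewrite !inE; apply/andP/imsetP => [[Cc /andP[ci cw]] | [c' + ->]].
    by exists (- c); rewrite ?opprK // !inE memvN Cc mxE (eqP ci) wtN cw andbT.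
  by rewrite !inE => /andP[Cc' /andP[ci cw]]; rewrite memvN Cc' mxE (eqP ci) wtN cw andbT.
have -> : A_through C i w = (#|ones| + #|twos|)%N.
  rewrite /A_through -!sum_bool_card -big_split /=.
  by apply: eq_bigr => c _; case/or3P: (F3_cases (c 0 i)) => /eqP ->; case: (wt c == w).
by rewrite twosE card_imset ?addnn ?dvdn2 ?odd_double //; exact: oppr_inj.
Qed.

End CodewordCounts.

Lemma coef_1addX_exp (R : nzRingType) N t : ((1 + 'X : {poly R}) ^+ N)`_t = 'C(N, t)%:R.
Proof.
elim: N t => [|N IH] t; first by rewrite expr0 coef1; case: t.
rewrite exprS mulrDl mul1r coefD coefXM IH.
by case: t => [|t] /=; rewrite ?addr0 ?bin0 ?IH // binS natrD.
Qed.

Section Triangular.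
Variables (R : idomainType) (L : nat) (k : nat -> R) (v : nat -> {poly R}).

Lemma coef_sumXn_lowest t : (forall l, (l < t)%N -> k l = 0) -> (t < L)%N ->
  (\sum_(l < L) k l *: ('X^l * v l))`_t = k t * (v t)`_0.
Proof.
move=> k0 tL; rewrite coef_sum (bigD1 (Ordinal tL)) //= big1 ?addr0 => [|l /eqP lt].
  by rewrite coefZ coefXnM ltnn subnn.
rewrite coefZ coefXnM; case: ltnP => [_|lt_t]; first by rewrite mulr0.
rewrite k0 ?mul0r // ltn_neqAle lt_t andbT; apply/eqP => tl; apply: lt; exact: val_inj.
Qed.

Lemma coef_sumXn_triangular T : (forall l, (v l)`_0 != 0) -> (T < L)%N ->
  (forall t, (t < T)%N -> (\sum_(l < L) k l *: ('X^l * v l))`_t = 0) ->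
  (\sum_(l < L) k l *: ('X^l * v l))`_T = k T * (v T)`_0.
Proof.
move=> v0 TL low; rewrite coef_sumXn_lowest //.
elim/ltn_ind => l IH lT; have lL : (l < L)%N := ltn_trans lT TL.
have := low l lT; rewrite coef_sumXn_lowest // => [/eqP|l' l'l]; last first.
  exact: IH _ l'l (ltn_trans l'l lT).
by rewrite mulf_eq0 (negbTE (v0 l)) orbF => /eqP.
Qed.

End Triangular.

Definition cube_quot : {poly int} := 3 + 3 * 'X + 'X ^+ 2.

Lemma one_addX_exp_cube q L : (q < L)%N ->
  (1 + 'X) ^+ (3 * q + 2) =
  \sum_(l < L) 'C(q, l)%:R *: ('X^l * ((1 + 'X) ^+ 2 * cube_quot ^+ l)).
Proof.
move=> qL.
have cube : (1 + 'X) ^+ 3 = 'X * cube_quot + 1 by rewrite /cube_quot; ring.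
rewrite exprD mulrC exprM cube exprD1n.
rewrite (big_ord_widen L (fun l => ('X * cube_quot) ^+ l *+ 'C(q, l))) //.
rewrite mulr_sumr big_mkcond /=; apply: eq_bigr => l _.
case: ltnP => [_ | ql]; last by rewrite bin_small // scale0r.
by rewrite -scaler_nat exprMn -scalerAr mulrCA.
Qed.

Lemma sum_binom_cube_shifts (I : finType) (e : I -> int) (q : I -> nat) r :
  (forall x, e x != 0 -> (q x < r)%N) ->
  (forall t, (t < r.-1)%N -> \sum_x e x * 'C(3 * q x + 2, t)%:R = 0) ->
  \sum_x e x * 'C(3 * q x + 2, r.-1)%:R = 3 ^+ r.-1 * \sum_(x | q x == r.-1) e x.
Proof.
move=> qr low; case: r qr low => [|r] qr low.
  have e0 x : e x = 0 by apply/eqP; apply: contraT => /qr.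
  by rewrite !big1 ?mulr0 // => x _; rewrite e0 ?mul0r.
pose v l : {poly int} := (1 + 'X) ^+ 2 * cube_quot ^+ l.
pose k l := \sum_x e x * 'C(q x, l)%:R.
pose H := \sum_x e x *: (1 + 'X) ^+ (3 * q x + 2).
have coefH t : H`_t = \sum_x e x * 'C(3 * q x + 2, t)%:R.
  by rewrite coef_sum; apply: eq_bigr => x _; rewrite coefZ coef_1addX_exp.
have expandH : H = \sum_(l < r.+1) k l *: ('X^l * v l).
  rewrite /H (eq_bigr (fun x => \sum_(l < r.+1) (e x * 'C(q x, l)%:R) *: ('X^l * v l))).
    by rewrite exchange_big; apply: eq_bigr => l _; rewrite scaler_suml.
  move=> x _; have [/eqP -> | /qr qx] := boolP (e x == 0).
    by rewrite scale0r big1 // => l _; rewrite mul0r scale0r.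
  by rewrite (one_addX_exp_cube qx) scaler_sumr; apply: eq_bigr => l _; rewrite scalerA.
have v0 l : (v l)`_0 = 3 ^+ l by rewrite -horner_coef0 !hornerE.
rewrite -coefH expandH coef_sumXn_triangular //= => [|l|t tr]; rewrite ?v0.
- rewrite mulrC; congr (_ * _); rewrite /k [RHS]big_mkcond /=.
  apply: eq_bigr => x _; case: eqP => [-> | qxr]; first by rewrite binn mulr1.
  have [/eqP -> | /qr qx] := boolP (e x == 0); first by rewrite mul0r.
  by rewrite bin_small ?mulr0 // ltn_neqAle -ltnS qx andbT; apply/eqP.
- by rewrite expf_neq0.
- by rewrite -expandH coefH low.
Qed.

Section NearExtremal.
Variables (m : nat) (C : ternary_code (12 * m)).
Hypotheses (m_gt0 : (0 < m)%N) (sdC : self_dual C)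
  (min_wt : forall c, c \in C -> c != 0 -> (3 * m <= wt c)%N).

Let q (c : 'rV[F3]_(12 * m)) := ((4 * m).-1 - wt c %/ 3)%N.

Lemma shortened_wt_shape i c : c \in shortened C i -> c != 0 ->
  [/\ ((12 * m).-1 - wt c = 3 * q c + 2)%N, (q c < 3 * m)%N
    & (q c == (3 * m).-1) = (wt c == 3 * m)].
Proof.
rewrite !inE => /andP[Cc ci] c0.
have /dvdnP[a wtc] := self_dual_wt_dvd3 sdC Cc.
have := min_wt Cc c0; have := @wt_lt_notin _ c i; rewrite mem_supp ci => /(_ isT).
rewrite /q wtc mulnK // => ? ?; split; first lia; first lia.
by apply/eqP/eqP; lia.
Qed.

Lemma A_through_small i w : (w < 3 * m)%N -> A_through C i w = 0%N.
Proof.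
move=> w_small; apply/eqP; rewrite cards_eq0; apply/eqP/setP => c; rewrite !inE.
apply/negbTE; apply: contraL w_small => /and3P[Cc ci /eqP <-]; rewrite -leqNgt min_wt //.
by apply: contraNneq ci => ->; rewrite mxE.
Qed.

Variables i j : 'I_(12 * m).

Let e (c : 'rV[F3]_(12 * m)) : int := (c \in shortened C i)%:R - (c \in shortened C j)%:R.

Lemma sum_e_binom t :
  \sum_c e c * 'C(3 * q c + 2, t)%:R
  = (\sum_(c in shortened C i) 'C((12 * m).-1 - wt c, t))%:R
    - (\sum_(c in shortened C j) 'C((12 * m).-1 - wt c, t))%:R.
Proof.
rewrite !natr_sum !(big_mkcond (fun c => c \in shortened _ _)) -sumrB /=.
apply: eq_bigr => c _; rewrite /e.
have [-> | c0] := eqVneq c 0.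
  by rewrite !inE mem0v !mxE eqxx /= !subrr mul0r.
case: (boolP (c \in shortened C i)) => ci; case: (boolP (c \in shortened C j)) => cj.
- by rewrite /= !subrr mul0r.
- by case: (shortened_wt_shape ci c0) => <- _ _; rewrite /= !subr0 mul1r.
- by case: (shortened_wt_shape cj c0) => <- _ _; rewrite /= !sub0r mulN1r.
- by rewrite /= !subrr mul0r.
Qed.

Lemma e_neq0 c : e c != 0 -> c != 0 /\ exists k, c \in shortened C k.
Proof.
rewrite /e; have [-> | c0] := eqVneq c 0; first by rewrite !inE mem0v !mxE eqxx.
case: (boolP (c \in shortened C i)) => [ci | _]; first by split; last exists i.
case: (boolP (c \in shortened C j)) => [cj | _]; last by rewrite subrr eqxx.
by split; last exists j.
Qed.

Lemma sum_e_min_wt :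
  \sum_(c | q c == (3 * m).-1) e c
  = (A_through C j (3 * m))%:R - (A_through C i (3 * m))%:R.
Proof.
have -> : \sum_(c | q c == (3 * m).-1) e c = \sum_(c | wt c == 3 * m) e c.
  rewrite big_mkcond [RHS]big_mkcond; apply: eq_bigr => c _.
  have [/e_neq0[c0 [k ck]] | /negPn/eqP ->] := boolP (e c != 0); last by case: ifP; case: ifP.
  by case: (shortened_wt_shape ck c0) => _ _ ->.
have card_short k : \sum_(c | wt c == 3 * m) ((c \in shortened C k) : nat)%:R
    = (A_w C (3 * m))%:R - (A_through C k (3 * m))%:R :> int.
  rewrite -natr_sum sum_bool_card (A_w_split C k) natrD addrK; congr _%:R.
  by apply: eq_card => c; rewrite !inE andbC.
by rewrite sumrB !card_short opprB addrC addrA subrK.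
Qed.

Lemma A_through_eq : A_through C i (3 * m) = A_through C j (3 * m).
Proof.
have C_gt0 : (0 < #|codewords C|)%N by apply/card_gt0P; exists 0; rewrite inE mem0v.
have diff t : (t < 3 * m)%N ->
    #|codewords C|%:R * \sum_c e c * 'C(3 * q c + 2, t)%:R
    = 3 ^+ (12 * m - t.+1) * ((A_through C i t.+1)%:R - (A_through C j t.+1)%:R) :> int.
  move=> tm; have min_wt_t c : c \in C -> c != 0 -> (t < wt c)%N.
    by move=> Cc c0; apply: leq_trans tm (min_wt Cc c0).
  rewrite sum_e_binom mulrBr -!natrM -(A_through_identity i sdC min_wt_t).
  by rewrite -(A_through_identity j sdC min_wt_t) !natrM !natrD natrX; ring.
have low t : (t < (3 * m).-1)%N -> \sum_c e c * 'C(3 * q c + 2, t)%:R = 0.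
  move=> tm; have small : (t.+1 < 3 * m)%N by lia.
  have := diff t (ltnW small); rewrite !A_through_small // subrr mulr0.
  by move/eqP; rewrite mulf_eq0 pnatr_eq0 (negbTE (lt0n_neq0 C_gt0)) => /eqP.
have qr c : e c != 0 -> (q c < 3 * m)%N.
  by case/e_neq0 => c0 [k ck]; case: (shortened_wt_shape ck c0).
have := sum_binom_cube_shifts qr low; rewrite sum_e_min_wt => top.
have last_t : ((3 * m).-1 < 3 * m)%N by lia.
have := diff _ last_t; rewrite prednK ?muln_gt0 // top.
set a := (A_through C i _)%:R; set b := (A_through C j _)%:R.
move/eqP; rewrite -subr_eq0.
set K := #|codewords C|%:R * 3 ^+ (3 * m).-1 + 3 ^+ (12 * m - 3 * m) : int.
have -> : #|codewords C|%:R * (3 ^+ (3 * m).-1 * (b - a)) - 3 ^+ (12 * m - 3 * m) * (a - b)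
    = - ((a - b) * K) by rewrite /K; ring.
have K_gt0 : 0 < K by rewrite addr_gt0 ?mulr_gt0 ?exprn_gt0 ?ltr0n.
by rewrite oppr_eq0 mulf_eq0 (negbTE (lt0r_neq0 K_gt0)) orbF subr_eq0 eqr_nat => /eqP.
Qed.

End NearExtremal.

Theorem lemma3p1 (m : nat) (C : ternary_code (12 * m)) :
  (0 < m)%N -> near_extremal C -> A_w C (3 * m) = 0 %[mod 8].
Proof.
move=> m_gt0 [sdC [_ min_wt]]; rewrite mulKn // in min_wt.
have i0 : 'I_(12 * m) by exists 0%N; rewrite muln_gt0.
have := sum_A_through C (3 * m).
under eq_bigr do rewrite (A_through_eq m_gt0 sdC min_wt _ i0).
have [b ->] := dvdnP (A_through_even C i0 (3 * m)).
rewrite sum_nat_const card_ord => counts.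
have : (3 * m * (8 * b) = 3 * m * A_w C (3 * m))%N by rewrite -counts; lia.
move/eqP; rewrite eqn_mul2l muln_eq0 /= (negbTE (lt0n_neq0 m_gt0)) => /eqP <-.
by rewrite modnMr.
Qed.
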